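(* Let $r \ge 3$ be an integer. For $n \ge 1$ let $g^{\mathrm{ns}}_r(n) = \max\{|\mathcal{F}| : \mathcal{F} \subseteq \{0,1\}^n \text{ contains no near-sunflower of size } r\}$ and $g^{\mathrm{ff}}_r(n) = \max\{|\mathcal{F}| : \mathcal{F} \subseteq \{0,1\}^n \text{ contains no focal family of size } r\}$. Then: (a) for every $n$, $g^{\mathrm{ns}}_r(n) \le g^{\mathrm{ff}}_r(n) \le (r-1)\, 2^{\lceil \frac{(r-2)n}{r-1} \rceil}$; (b) there exist positive constants $c^{\mathrm{ns}}_r$ and $c^{\mathrm{ff}}_r$ (depending only on $r$) such that for every $n$, $g^{\mathrm{ns}}_r(n) \ge c^{\mathrm{ns}}_r \left(\frac{2}{(r+1)^{1/(r-1)}}\right)^n$ and $g^{\mathrm{ff}}_r(n) \ge c^{\mathrm{ff}}_r \left(\frac{2}{r^{1/(r-1)}}\right)^n$.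
   Context: Vectors in $\{0,1\}^n$ are identified with subsets of $[n]=\{1,\dots,n\}$. A family $\mathcal{H}$ of $r$ distinct subsets of $[n]$ is a near-sunflower of size $r$ if every $i \in [n]$ belongs to exactly $0$, $1$, $r-1$ or $r$ of the sets in $\mathcal{H}$. A family $x^{(0)}, x^{(1)}, \dots, x^{(r-1)}$ of $r$ distinct vectors in $\{0,1\}^n$ is focal (with focus $x^{(0)}$) if for every coordinate $i \in [n]$, at least $r-2$ of the $r-1$ entries $x^{(1)}_i, \dots, x^{(r-1)}_i$ are equal to $x^{(0)}_i$. A family $\mathcal{F}$ contains a focal family of size $r$ if some $r$ distinct members of $\mathcal{F}$, with some choice of one of them as focus, form a focal family. *)

From HB Require Import structures.
From mathcomp Require Import all_boot all_order all_algebra.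
Set Implicit Arguments. Unset Strict Implicit. Unset Printing Implicit Defensive.

(* Vectors in {0,1}^n are identified with subsets of [n] = 'I_n. *)

Definition near_sunflower (n r : nat) (H : {set {set 'I_n}}) : bool :=
  (#|H| == r) &&
  [forall i : 'I_n, #|[set A in H | i \in A]| \in [:: 0; 1; r.-1; r]].

Definition has_near_sunflower (n r : nat) (F : {set {set 'I_n}}) : bool :=
  [exists H : {set {set 'I_n}}, (H \subset F) && near_sunflower r H].

(* x0 (focus) together with the r-1 distinct other members S (x0 not in S)
   form a focal family of size r: for every coordinate i, at least r-2 of the
   r-1 members of S agree with x0 at i. *)
Definition focal (n r : nat) (x0 : {set 'I_n}) (S : {set {set 'I_n}}) : bool :=
  (x0 \notin S) && (#|S| == r.-1) &&
  [forall i : 'I_n, r.-2 <= #|[set B in S | (i \in B) == (i \in x0)]|].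

Definition has_focal (n r : nat) (F : {set {set 'I_n}}) : bool :=
  [exists x0 : {set 'I_n}, exists S : {set {set 'I_n}},
     [&& x0 \in F, S \subset F & focal r x0 S]].

Definition g_ns (r n : nat) : nat :=
  \max_(F : {set {set 'I_n}} | ~~ has_near_sunflower r F) #|F|.

Definition g_ff (r n : nat) : nat :=
  \max_(F : {set {set 'I_n}} | ~~ has_focal r F) #|F|.

Definition ceil_div (a b : nat) : nat := (a + b.-1) %/ b.

(* Every focal family is a near-sunflower, so g_ns <= g_ff.

   Upper bound: split the coordinates into r-1 residue classes I_j.  If a member
   x of a family F had, for every j, another member y_j agreeing with x outside
   I_j, then x and the y_j would form a focal family with focus x.  Hence in a
   family without focal families every member is determined by its restriction
   to the complement of some I_j, leaving at most 2^(n - |I_j|) members per class.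

   Lower bounds: in a near-sunflower (resp. focal family) of size r every
   coordinate has a default bit from which at most one member deviates, so there
   are at most (2L)^n such patterns, with L = r+1 (resp. L = r).  Keep the sets
   coloured 0 by a uniform colouring with q colours and delete one point from
   each surviving pattern; averaging over colourings gives a pattern-free family
   of size at least 2^n/q - (2L)^n/q^r, which is 2^n/(2q) once q^(r-1) >= 2 L^n.
   The least such q is at most 3 (L^(1/(r-1)))^n. *)

From HB Require Import structures.
From mathcomp Require Import all_boot all_order all_algebra.
From mathcomp Require Import all_classical all_reals all_analysis.
Import Order.TTheory GRing.Theory Num.Theory.
From mathcomp Require Import zify lra.
Set Implicit Arguments. Unset Strict Implicit. Unset Printing Implicit Defensive.

Lemma card_sep_setU1 (T : finType) (a : T) (A : {set T}) (P : pred T) :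
  a \notin A -> #|[set x in a |: A | P x]| = P a + #|[set x in A | P x]|.
Proof.
move=> aA; case Pa: (P a).
  have -> : [set x in a |: A | P x] = a |: [set x in A | P x].
    by apply/finset.setP=> x; rewrite !inE; case: eqP => // ->; rewrite Pa.
  by rewrite cardsU1 inE (negbTE aA).
apply: eq_card => x; rewrite !inE.
by case: eqP => [->|] //=; rewrite Pa andbF.
Qed.

Lemma card_sep_predC (T : finType) (A : {set T}) (P : pred T) :
  #|[set x in A | P x]| + #|[set x in A | ~~ P x]| = #|A|.
Proof.
rewrite -(cardsID [set x | P x] A); congr (_ + _); apply: eq_card => x;
  by rewrite !inE andbC.
Qed.

Lemma focal_disagree_le1 n r (x0 : {set 'I_n}) S i :
  focal r x0 S -> #|[set B in S | (i \in B) != (i \in x0)]| <= 1.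
Proof.
case/andP=> /andP[_ /eqP cardS] /forallP/(_ i).
have := card_sep_predC S (fun B => (i \in B) == (i \in x0)).
set m := #|[set B in S | (i \in B) == (i \in x0)]|; lia.
Qed.

Lemma focal_near_sunflower n r (x0 : {set 'I_n}) S :
  2 <= r -> focal r x0 S -> near_sunflower r (x0 |: S).
Proof.
move=> r2 foc; have /andP[/andP[x0S /eqP cardS] _] := foc.
rewrite /near_sunflower cardsU1 x0S cardS; apply/andP; split; first by apply/eqP; lia.
apply/forallP=> i; rewrite card_sep_setU1 //.
have disagree := focal_disagree_le1 i foc.
have := card_sep_predC S (fun B => i \in B); rewrite cardS.
set m := #|[set B in S | i \in B]|; set m' := #|[set B in S | i \notin B]|.
case: (i \in x0) in disagree * => /= msum.
- have m'_le1 : m' <= 1 by apply: leq_trans disagree; rewrite subset_leq_card //;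
    apply/fintype.subsetP=> B; rewrite !inE; case: (i \in B).
  have : (1 + m == r.-1) || (1 + m == r) by lia.
  by case/orP=> /eqP ->; rewrite !inE eqxx ?orbT.
- have m_le1 : m <= 1 by apply: leq_trans disagree; rewrite subset_leq_card //;
    apply/fintype.subsetP=> B; rewrite !inE; case: (i \in B).
  have : (m == 0) || (m == 1) by lia.
  by case/orP=> /eqP ->; rewrite !inE eqxx ?orbT.
Qed.

Lemma has_focal_near_sunflower n r (F : {set {set 'I_n}}) :
  2 <= r -> has_focal r F -> has_near_sunflower r F.
Proof.
move=> r2 /existsP[x0 /existsP[S /and3P[x0F SF foc]]].
apply/existsP; exists (x0 |: S); rewrite focal_near_sunflower // andbT.
by rewrite finset.subUset finset.sub1set x0F.
Qed.

Lemma g_ns_le_g_ff r n : 2 <= r -> g_ns r n <= g_ff r n.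
Proof.
move=> r2; apply/bigmax_leqP => F nsF; apply: leq_bigmax_cond.
exact: contra (has_focal_near_sunflower r2) nsF.
Qed.

Lemma leq_card_bigcup (I T : finType) (B : I -> {set T}) :
  #|\bigcup_i B i| <= \sum_i #|B i|.
Proof.
elim/big_ind2: _ => [|U1 s1 U2 s2 h1 h2|//]; first by rewrite cards0.
by rewrite cardsU; lia.
Qed.

Definition residue_class n k (j : nat) : {set 'I_n} := [set i : 'I_n | i %% k == j].

Lemma card_residue_class_ge n k j : j < k -> n %/ k <= #|residue_class n k j|.
Proof.
move=> jk; have k0 : 0 < k by lia.
have lt_n (t : 'I_(n %/ k)) : t * k + j < n.
  by have := ltn_ord t; have := leq_divM n k; nia.
pose f t := Ordinal (lt_n t).
have f_inj : injective f.
  move=> t1 t2 /(congr1 val) /= /eqP; rewrite eqn_add2r eqn_pmul2r // => /eqP.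
  exact: val_inj.
rewrite -[n %/ k]card_ord -(card_imset _ f_inj); apply: subset_leq_card.
by apply/fintype.subsetP=> _ /imsetP[t _ ->]; rewrite inE /= modnMDl modn_small.
Qed.

Lemma card_setC_residue_class_le n k j :
  j < k -> #|~: residue_class n k j| <= ceil_div (k.-1 * n) k.
Proof.
move=> jk; have k0 : 0 < k by lia.
have := card_residue_class_ge n jk; have := cardsC (residue_class n k j).
rewrite card_ord /ceil_div leq_divRL //.
have := divn_eq n k; have := ltn_pmod n k0; nia.
Qed.

Section Blocks.
Variable T : finType.
Implicit Types (F : {set {set T}}) (I x y : {set T}).

Definition determined_outside F I x :=
  [forall y in F, (y :\: I == x :\: I) ==> (y == x)].

Lemma card_determined_outside_le F I :
  #|[set x in F | determined_outside F I x]| <= 2 ^ #|~: I|.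
Proof.
have inj : {in [set x in F | determined_outside F I x] &, injective (fun x => x :\: I)}.
  move=> x1 x2; rewrite !inE => /andP[_ /forallP det1] /andP[x2F _] eq12.
  by have := det1 x2; rewrite x2F eq12 eqxx => /eqP.
rewrite -(card_in_imset inj) -card_powerset; apply: subset_leq_card.
by apply/fintype.subsetP=> _ /imsetP[x _ ->]; rewrite inE finset.setDE subsetIr.
Qed.

Lemma agree_outside (i : T) I x y : y :\: I = x :\: I -> i \notin I -> (i \in y) = (i \in x).
Proof. by move/finset.setP/(_ i); rewrite !inE => e /negPf iI; rewrite iI in e. Qed.

Lemma agree_outside_inj k (I : 'I_k -> {set T}) x (y : 'I_k -> {set T}) :
  (forall i, #|[set j | i \in I j]| <= 1) ->
  (forall j, y j != x) -> (forall j, y j :\: I j = x :\: I j) -> injective y.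
Proof.
move=> block1 yx yI j1 j2 y12.
have [i] : exists i, (i \in y j1) != (i \in x).
  apply/existsP; apply: contraR (yx j1) => /existsPn same.
  by apply/eqP/finset.setP=> i; apply/eqP/negbNE.
have inI j : (i \in y j) != (i \in x) -> i \in I j.
  by apply: contraNT => iI; rewrite (agree_outside (yI j) iI).
move=> diff1; have diff2 : (i \in y j2) != (i \in x) by rewrite -y12.
by apply: (card_le1_eqP (block1 i)); rewrite inE inI.
Qed.

End Blocks.

Lemma focal_of_agree_outside n k (I : 'I_k -> {set 'I_n}) x (y : 'I_k -> {set 'I_n}) :
  (forall i, #|[set j | i \in I j]| <= 1) ->
  (forall j, y j != x) -> (forall j, y j :\: I j = x :\: I j) ->
  focal k.+1 x [set y j | j : 'I_k].
Proof.
move=> block1 yx yI; have y_inj := agree_outside_inj block1 yx yI.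
rewrite /focal card_imset // card_ord eqxx andbT; apply/andP; split.
  by apply/imsetP=> -[j _ xy]; move: (yx j); rewrite -xy eqxx.
apply/forallP=> i; rewrite -[k.+1.-2]/(k.-1).
have agree : [set y j | j in ~: [set j | i \in I j]]
    \subset [set B in [set y j | j : 'I_k] | (i \in B) == (i \in x)].
  apply/fintype.subsetP=> _ /imsetP[j jI ->]; rewrite inE imset_f //=.
  by rewrite (agree_outside (yI j)) //; rewrite !inE in jI.
apply: leq_trans (subset_leq_card agree); rewrite card_imset //.
have := cardsC [set j | i \in I j]; have := block1 i; rewrite card_ord.
by set m := #|[set j | i \in I j]|; lia.
Qed.

Lemma card_le_of_not_has_focal n k (I : 'I_k -> {set 'I_n}) (F : {set {set 'I_n}}) :
  (forall i, #|[set j | i \in I j]| <= 1) -> ~~ has_focal k.+1 F ->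
  #|F| <= \sum_j 2 ^ #|~: I j|.
Proof.
move=> block1 noF.
have cover : F \subset \bigcup_j [set x in F | determined_outside F (I j) x].
  apply/fintype.subsetP=> x xF; apply: contraR noF => /bigcupP not_det.
  have witness j : exists y, [&& y \in F, y != x & y :\: I j == x :\: I j].
    have /forallPn[y] : ~~ determined_outside F (I j) x.
      by apply/negP=> det; apply: not_det; exists j; rewrite ?inE ?xF.
    rewrite !negb_imply => /andP[yF /andP[yI yx]].
    by exists y; rewrite yF yx yI.
  have [y yP] := fin_all_exists witness.
  have yx j : y j != x by case/and3P: (yP j).
  have yI j : y j :\: I j = x :\: I j by case/and3P: (yP j) => _ _ /eqP.
  apply/existsP; exists x; apply/existsP; exists [set y j | j : 'I_k].
  rewrite xF (focal_of_agree_outside block1 yx yI) andbT.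
  by apply/fintype.subsetP=> _ /imsetP[j _ ->]; case/and3P: (yP j).
apply: leq_trans (subset_leq_card cover) _; apply: leq_trans (leq_card_bigcup _) _.
by apply: leq_sum => j _; apply: card_determined_outside_le.
Qed.

Lemma g_ff_le r n : 1 < r -> g_ff r n <= r.-1 * 2 ^ ceil_div (r.-2 * n) r.-1.
Proof.
case: r => // k /ltnSE k0 /=; apply/bigmax_leqP => F noF.
pose I (j : 'I_k) := residue_class n k j.
have block1 i : #|[set j | i \in I j]| <= 1.
  apply/card_le1_eqP=> j1 j2; rewrite !inE => /eqP e1 /eqP e2.
  by apply: val_inj; rewrite /= -e1 -e2.
apply: leq_trans (card_le_of_not_has_focal block1 noF) _.
rewrite -[k in k * _]card_ord -sum_nat_const; apply: leq_sum => j _.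
exact/leq_pexp2l/card_setC_residue_class_le.
Qed.

Lemma double_count (I J : finType) (P : I -> J -> bool) :
  \sum_i #|[set j | P i j]| = \sum_j #|[set i | P i j]|.
Proof.
have card_sum (K : finType) (Q : pred K) : #|[set k | Q k]| = \sum_k Q k.
  by rewrite -sum1_card big_mkcond; apply: eq_bigr => k _; rewrite inE.
under eq_bigr do rewrite card_sum; rewrite exchange_big.
by under [RHS]eq_bigr do rewrite card_sum.
Qed.

Lemma exists_leq_of_sum_leq (I : finType) (f g : I -> nat) :
  0 < #|I| -> \sum_i f i <= \sum_i g i -> exists i, f i <= g i.
Proof.
move=> I0 fg; apply/existsP; apply: contraTT fg => /existsPn gf.
rewrite -ltnNge; apply: leq_trans (_ : \sum_i (g i + 1) <= _).
  by rewrite big_split /= sum1_card -addn1 leq_add2l.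
by apply: leq_sum => i _; rewrite addn1 ltnNge gf.
Qed.

Lemma exists_avoiding_subset (T : finType) (Bad : {set {set T}}) (Z : {set T}) :
  (forall H, H \in Bad -> 0 < #|H|) ->
  exists F : {set T}, (forall H, H \in Bad -> ~~ (H \subset F)) /\
    #|Z| <= #|F| + #|[set H in Bad | H \subset Z]|.
Proof.
move=> nonempty; set BZ := [set H in Bad | H \subset Z].
pose pk (H : {set T}) := [pick y in H].
pose R := [set x in pmap pk (enum BZ)].
exists (Z :\: R); split=> [H HB|]; last first.
  have cardR : #|R| <= #|BZ|.
    by rewrite cardsE (leq_trans (card_size _)) // size_pmap cardE count_size.
  by rewrite cardsD; have := subset_leq_card (subsetIr Z R); lia.
apply/negP=> HZR; have /card_gt0P[y yH] := nonempty H HB.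
have [z zH pkH] : exists2 z, z \in H & pk H = Some z.
  by rewrite /pk; case: pickP => [z zH|/(_ y)]; [exists z | rewrite yH].
have zR : z \in R.
  rewrite inE mem_pmap; apply/mapP; exists H => //.
  by rewrite mem_enum inE HB (fintype.subset_trans HZR) ?subsetDl.
by have := fintype.subsetP HZR z zH; rewrite inE zR.
Qed.

Section RandomColoring.
Variables (T : finType) (p : nat).
Implicit Types (c : {ffun T -> 'I_p.+1}) (H : {set T}).

Definition zero_set c := [set x | c x == ord0].

Lemma card_colorings_zero_on H :
  #|[set c | H \subset zero_set c]| = p.+1 ^ (#|T| - #|H|).
Proof.
have -> : #|[set c : {ffun T -> 'I_p.+1} | H \subset zero_set c]|
    = #|family (fun x : T => if x \in H then pred1 (@ord0 p) else predT)|.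
  apply: eq_card => c; rewrite !inE /zero_set; apply/fintype.subsetP/familyP => Hc x.
    by case: ifP => // /Hc; rewrite inE.
  by move=> xH; have := Hc x; rewrite xH inE.
rewrite card_family foldrE big_map big_enum /=.
rewrite (eq_bigr (fun x => if x \in ~: H then p.+1 else 1)) => [|x _].
  by rewrite -big_mkcond prod_nat_const -(cardsC H) addKn.
by rewrite inE; case: (x \in H); rewrite ?card1 // cardT size_enum_ord.
Qed.

Lemma sum_card_zero_set :
  p.+1 * \sum_(c : {ffun T -> 'I_p.+1}) #|zero_set c| = #|T| * p.+1 ^ #|T|.
Proof.
rewrite (double_count (fun c x => c x == ord0)) big_distrr /= -sum_nat_const.
apply: eq_bigr => x _.
have -> : #|[set c : {ffun T -> 'I_p.+1} | c x == ord0]| = p.+1 ^ #|T|.-1.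
  rewrite -subn1 -(cards1 x) -card_colorings_zero_on; apply: eq_card => c.
  by rewrite !inE finset.sub1set inE.
by rewrite -expnS prednK //; apply/card_gt0P; exists x.
Qed.

Variables (Bad : {set {set T}}) (r : nat).
Hypothesis bad_large : forall H, H \in Bad -> r <= #|H|.

Definition bad_in c := [set H in Bad | H \subset zero_set c].

Lemma sum_card_bad_in :
  p.+1 ^ r * \sum_(c : {ffun T -> 'I_p.+1}) #|bad_in c| <= p.+1 ^ #|T| * #|Bad|.
Proof.
rewrite (double_count (fun c H => (H \in Bad) && (H \subset zero_set c))).
rewrite big_distrr /= mulnC -sum_nat_const [X in _ <= X]big_mkcond /=.
apply: leq_sum => H _; case: ifP => HB; last first.
  by rewrite eq_card0 ?muln0 // => c; rewrite !inE.
rewrite (eq_card (B := [set c | H \subset zero_set c])) => [|c]; last by rewrite !inE.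
rewrite card_colorings_zero_on -expnD leq_pexp2l //.
have := bad_large HB; have := max_card H; set N := #|T|; lia.
Qed.

Lemma exists_coloring_few_bad : 0 < r -> exists c : {ffun T -> 'I_p.+1},
  p.+1 ^ r.-1 * #|T| + p.+1 ^ r * #|bad_in c| <= p.+1 ^ r * #|zero_set c| + #|Bad|.
Proof.
move=> r0; apply: exists_leq_of_sum_leq; first by rewrite card_ffun card_ord expn_gt0.
rewrite !big_split /= -!big_distrr /= !sum_nat_const card_ffun card_ord.
have qr : p.+1 ^ r = p.+1 ^ r.-1 * p.+1 by rewrite -expnSr prednK.
rewrite [in X in _ <= X]qr -mulnA sum_card_zero_set.
by rewrite (mulnC #|T|) leq_add2l; apply: sum_card_bad_in.
Qed.

End RandomColoring.

Lemma alteration (T : finType) (Bad : {set {set T}}) r p :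
  0 < r -> (forall H, H \in Bad -> r <= #|H|) ->
  2 * #|Bad| <= p.+1 ^ r.-1 * #|T| ->
  exists F : {set T}, (forall H, H \in Bad -> ~~ (H \subset F)) /\ #|T| <= 2 * p.+1 * #|F|.
Proof.
move=> r0 bad_large few_bad.
have [c c_good] := exists_coloring_few_bad p bad_large r0.
have nonempty H : H \in Bad -> 0 < #|H| by move/bad_large; apply: leq_trans.
have [F [F_avoids cardF]] := exists_avoiding_subset (zero_set c) nonempty.
exists F; split=> //.
have a0 : 0 < p.+1 ^ r.-1 by rewrite expn_gt0.
have q_r : p.+1 ^ r = p.+1 * p.+1 ^ r.-1 by rewrite -expnS prednK.
have F_large : p.+1 ^ r * #|zero_set c| <= p.+1 ^ r * (#|F| + #|bad_in Bad c|).
  by rewrite leq_mul2l cardF orbT.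
rewrite -(leq_pmul2l a0) (_ : _ * (2 * _ * _) = 2 * (p.+1 ^ r * #|F|)); last first.
  by rewrite q_r; lia.
by rewrite mulnDr in F_large; lia.
Qed.

Lemma enum_bij (T : finType) (S : {set T}) k : #|S| = k ->
  exists e : 'I_k -> T, injective e /\ S = [set e j | j : 'I_k].
Proof.
move=> <-; exists (@enum_val T (mem S)); split; first exact: enum_val_inj.
apply/finset.setP => x; apply/idP/imsetP => [xS|[j _ ->]]; last exact: enum_valP.
by exists (enum_rank_in xS x); rewrite ?enum_rankK_in.
Qed.

Section Codes.
Variables n k : nat.
Implicit Type c : {ffun 'I_n -> bool * option 'I_k}.

(* A code records, for each coordinate i, a default bit (c i).1 and at most one
   member (c i).2 whose entry at i is the complement of that default. *)

Definition code_member c (j : 'I_k) : {set 'I_n} :=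
  [set i | (c i).1 (+) ((c i).2 == Some j)].

Definition code_members c := [set code_member c j | j : 'I_k].

Lemma members_code (S : {set {set 'I_n}}) (b : 'I_n -> bool) :
  #|S| = k -> (forall i, #|[set A in S | (i \in A) != b i]| <= 1) ->
  exists c, S = code_members c /\ forall i, (c i).1 = b i.
Proof.
move=> cardS sparse; have [e [e_inj eS]] := enum_bij cardS.
pose c := [ffun i => (b i, [pick j | (i \in e j) != b i])].
exists c; split=> [|i]; last by rewrite ffunE.
rewrite eS; suff e_code j : e j = code_member c j.
  by apply/finset.setP=> A; apply/imsetP/imsetP=> -[j _ ->]; exists j; rewrite ?e_code.
apply/finset.setP=> i; rewrite inE ffunE /=.
have unique : #|[set j | (i \in e j) != b i]| <= 1.
  apply: leq_trans (sparse i); rewrite -(card_imset _ e_inj) subset_leq_card //.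
  apply/fintype.subsetP=> _ /imsetP[l dl ->]; rewrite inE in dl.
  by rewrite inE dl andbT eS imset_f.
case: pickP => [j' dj'|none]; last by have := none j; case: (i \in e j); case: (b i).
have [<-|neq] := eqVneq j' j.
  by rewrite eqxx; move: dj'; case: (i \in e j'); case: (b i).
have /eqP dj : (i \in e j) == b i.
  by apply: contraR neq => dj; apply/eqP/(card_le1_eqP unique); rewrite inE.
by rewrite dj (inj_eq Some_inj) (negbTE neq) addbF.
Qed.

End Codes.

Definition near_sunflowers n r := [set H : {set {set 'I_n}} | near_sunflower r H].

Definition focal_families n r :=
  [set H : {set {set 'I_n}} | [exists x0, exists S, focal r x0 S && (H == x0 |: S)]].

Lemma card_codes n k : #|{ffun 'I_n -> bool * option 'I_k}| = (2 * k.+1) ^ n.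
Proof. by rewrite card_ffun card_prod card_bool card_option !card_ord. Qed.

Lemma card_near_sunflowers_le n r : #|near_sunflowers n r| <= (2 * r.+1) ^ n.
Proof.
rewrite -card_codes -cardsT; apply: leq_trans (leq_imset_card (@code_members n r) _).
apply: subset_leq_card; apply/fintype.subsetP=> H.
rewrite inE => /andP[/eqP cardH /forallP deg].
pose b i := 1 < #|[set A in H | i \in A]|.
suff [c [-> _]] : exists c : {ffun 'I_n -> bool * option 'I_r},
    H = code_members c /\ forall i, (c i).1 = b i.
  by apply/imsetP; exists c.
apply: (members_code (b := b) cardH) => i; have := deg i; rewrite /b !inE.
have := card_sep_predC H (fun A => i \in A); rewrite cardH.
set m := #|[set A in H | i \in A]|; case: ltnP => m1 msum mdeg.
- apply: leq_trans (_ : #|[set A in H | i \notin A]| <= 1); last by lia.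
  by apply: subset_leq_card; apply/fintype.subsetP=> A; rewrite !inE; case: (i \in A).
- apply: leq_trans m1; apply: subset_leq_card.
  by apply/fintype.subsetP=> A; rewrite !inE; case: (i \in A).
Qed.

Lemma card_focal_families_le n r : 0 < r -> #|focal_families n r| <= (2 * r) ^ n.
Proof.
move=> r0; rewrite -(prednK r0) -card_codes -cardsT.
pose encode (c : {ffun 'I_n -> bool * option 'I_r.-1}) :=
  [set i | (c i).1] |: code_members c.
apply: leq_trans (leq_imset_card encode _); apply: subset_leq_card.
apply/fintype.subsetP=> _ /[!inE] /existsP[x0 /existsP[S /andP[foc /eqP ->]]].
have [_ /eqP cardS] := andP (proj1 (andP foc)).
have [c [-> c_focus]] := members_code (b := fun i => i \in x0) cardS
  (fun i => focal_disagree_le1 i foc).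
apply/imsetP; exists c => //; congr (_ |: _).
by apply/finset.setP=> i; rewrite inE c_focus.
Qed.

Lemma card_sets n : #|{set 'I_n}| = 2 ^ n.
Proof. by rewrite -cardsT -powersetT card_powerset cardsT card_ord. Qed.

Lemma exists_large_avoiding n r q L (Bad : {set {set {set 'I_n}}}) :
  0 < r -> 0 < q -> (forall H, H \in Bad -> r <= #|H|) ->
  #|Bad| <= (2 * L) ^ n -> 2 * L ^ n <= q ^ r.-1 ->
  exists F : {set {set 'I_n}},
    (forall H, H \in Bad -> ~~ (H \subset F)) /\ 2 ^ n <= 2 * q * #|F|.
Proof.
move=> r0 q0 large few_bad L_q.
rewrite -(prednK q0) -card_sets; apply: alteration r0 large _.
rewrite prednK // card_sets [X in _ <= X]mulnC.
apply: leq_trans (_ : 2 * (2 * L) ^ n <= _); first by rewrite leq_mul2l few_bad orbT.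
by rewrite expnMn mulnCA leq_mul2l L_q orbT.
Qed.

Lemma g_ns_ge r n q : 0 < r -> 0 < q -> 2 * r.+1 ^ n <= q ^ r.-1 ->
  2 ^ n <= 2 * q * g_ns r n.
Proof.
move=> r0 q0 r_q.
have large H : H \in near_sunflowers n r -> r <= #|H| by rewrite inE => /andP[/eqP ->].
have [F [F_avoids cardF]] :=
  exists_large_avoiding r0 q0 large (card_near_sunflowers_le n r) r_q.
rewrite (leq_trans cardF) // leq_mul2l; apply/orP; right; apply: leq_bigmax_cond.
apply/negP=> /existsP[H /andP[HF ns]].
have nsH : H \in near_sunflowers n r by rewrite inE.
by have := F_avoids _ nsH; rewrite HF.
Qed.

Lemma g_ff_ge r n q : 0 < r -> 0 < q -> 2 * r ^ n <= q ^ r.-1 ->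
  2 ^ n <= 2 * q * g_ff r n.
Proof.
move=> r0 q0 r_q.
have large H : H \in focal_families n r -> r <= #|H|.
  rewrite inE => /existsP[x0 /existsP[S /andP[/andP[/andP[x0S /eqP cardS] _] /eqP ->]]].
  by rewrite cardsU1 x0S cardS add1n prednK.
have [F [F_avoids cardF]] :=
  exists_large_avoiding r0 q0 large (card_focal_families_le n r0) r_q.
rewrite (leq_trans cardF) // leq_mul2l; apply/orP; right; apply: leq_bigmax_cond.
apply/negP=> /existsP[x0 /existsP[S /and3P[x0F SF foc]]].
have focU : x0 |: S \in focal_families n r.
  by rewrite inE; apply/existsP; exists x0; apply/existsP; exists S; rewrite foc eqxx.
by have := F_avoids _ focU; rewrite finset.subUset finset.sub1set x0F SF.
Qed.

Lemma exists_pow_bracket m k : 0 < k -> 0 < m ->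
  exists q, [/\ 0 < q, m <= q ^ k & q.-1 ^ k < m].
Proof.
move=> k0 m0; have ex_q : exists q, m <= q ^ k.
  by exists m; rewrite -{1}(expn1 m) leq_pexp2l.
case: (ex_minnP ex_q) => q m_le min_q.
have q0 : 0 < q by case: q m_le {min_q} => //; rewrite exp0n //; lia.
exists q; split=> //; rewrite ltnNge; apply/negP=> /min_q; lia.
Qed.

Section RealBounds.
Local Open Scope ring_scope.
Variable R : realType.

Lemma powR_invnK (x : R) k : 0 <= x -> (0 < k)%N -> (x `^ k%:R^-1) ^+ k = x.
Proof.
move=> x0 k0; rewrite -powR_mulrn ?powR_ge0 // -powRrM mulVf ?powRr1 //.
by rewrite pnatr_eq0 -lt0n.
Qed.

Lemma geometric_lower_bound k L (G : nat -> nat) : (0 < k)%N -> (0 < L)%N ->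
  (forall n q, (0 < q)%N -> (2 * L ^ n <= q ^ k)%N -> (2 ^ n <= 2 * q * G n)%N) ->
  forall n, 1 / 6 * (2 / L%:R `^ k%:R^-1) ^+ n <= (G n)%:R :> R.
Proof.
move=> k0 L0 G_ge n; set a := L%:R `^ k%:R^-1.
have a_k : a ^+ k = L%:R by rewrite powR_invnK.
have an_ge1 : 1 <= a ^+ n.
  apply: exprn_ege1; rewrite -(powRr0 (L%:R : R)) ler_powR ?invr_ge0 //.
  by rewrite ler1n.
have [q [q0 Lq qL]] : exists q, [/\ 0 < q, 2 * L ^ n <= q ^ k & q.-1 ^ k < 2 * L ^ n]%N.
  by apply: exists_pow_bracket; rewrite ?muln_gt0 ?expn_gt0 ?L0.
(* q is the least integer with 2 L^n <= q^k, hence q - 1 < 2 a^n. *)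
have q_le : q%:R <= 3 * a ^+ n.
  suff qm1 : (q.-1)%:R < 2 * a ^+ n by rewrite -(prednK q0) -natr1; lra.
  rewrite -(ltr_pXn2r k0) ?nnegrE ?mulr_ge0 ?exprn_ge0 ?powR_ge0 //.
  rewrite -natrX exprMn -exprM mulnC exprM a_k -natrX.
  apply: lt_le_trans (_ : (2 * L ^ n)%N%:R <= _); first by rewrite ltr_nat.
  by rewrite natrM natrX ler_wpM2r ?exprn_ge0 // ler_nat -{1}(expn1 2) leq_pexp2l.
have := G_ge n q q0 Lq; rewrite -(ler_nat R) !natrM natrX => two_n.
rewrite expr_div_n mulrA ler_pdivrMr; last by apply: lt_le_trans an_ge1.
set X := (G n)%:R in two_n *; have X0 : 0 <= X by [].
have : q%:R * X <= 3 * a ^+ n * X by rewrite ler_wpM2r.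
lra.
Qed.

End RealBounds.

Theorem theorem1p3 (r : nat) (hr : 3 <= r) :
  (forall n : nat, 1 <= n ->
     g_ns r n <= g_ff r n /\
     g_ff r n <= r.-1 * 2 ^ ceil_div (r.-2 * n) r.-1) /\
  (forall R : realType,
     exists cns : R, exists cff : R,
       (0 < cns)%R /\ (0 < cff)%R /\
       (forall n : nat, 1 <= n ->
          (cns * (2 / (r.+1%:R `^ (r.-1%:R)^-1)) ^+ n <= (g_ns r n)%:R)%R /\
          (cff * (2 / (r%:R `^ (r.-1%:R)^-1)) ^+ n <= (g_ff r n)%:R)%R)).
Proof.
have r0 : 0 < r by lia.
have k0 : 0 < r.-1 by lia.
split=> [n _|R]; first by split; [apply: g_ns_le_g_ff | apply: g_ff_le]; lia.
have c0 : (0 < 1 / 6 :> R)%R by rewrite divr_gt0.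
exists (1 / 6)%R, (1 / 6)%R; do 2!split=> //; move=> n _; split.
- by apply: geometric_lower_bound => // m q; apply: g_ns_ge.
- by apply: geometric_lower_bound => // m q; apply: g_ff_ge.
Qed.
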